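(* Let $(L,\wedge,\vee,0,1)$ be a bounded lattice with additive Nakano mosaic $(L,\boxplus,0)$, where $x\boxplus y:=\{z\in L\mid x\vee y=x\vee z=z\vee y\}$. For $x,y,z\in L$, we have $z=x\vee y$ if and only if $x,y\in z\boxplus z$ and $z\in x\boxplus y$. *)

From HB Require Import structures.
From mathcomp Require Import all_boot all_order.
Set Implicit Arguments. Unset Strict Implicit. Unset Printing Implicit Defensive.
Import Order.TTheory.
Local Open Scope order_scope.

Definition nakano_add (d : Order.disp_t) (L : latticeType d) (x y : L) : pred L :=
  fun z => (x `|` y == x `|` z) && (x `|` z == z `|` y).

From HB Require Import structures.
From mathcomp Require Import all_boot all_order.
Local Open Scope order_scope.
Import Order.TTheory.

(* Since z ⊞ z is exactly the down-set of z, the first two conditions say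
   that z is an upper bound of x and y; then x ∨ y = x ∨ z = z, where the
   first equality is the membership z ∈ x ⊞ y. *)

Section NakanoAdd.

Variables (d : Order.disp_t) (L : latticeType d).
Implicit Types x y z t : L.

Lemma nakano_addE x y z :
  (z \in nakano_add x y) = (x `|` y == x `|` z) && (x `|` z == z `|` y).
Proof. by []. Qed.

Lemma nakano_add_diag z t : (t \in nakano_add z z) = (t <= z).
Proof. by rewrite nakano_addE joinxx [t `|` z]joinC eqxx andbT eq_sym leEjoin joinC. Qed.

Lemma join_nakano_add x y : x `|` y \in nakano_add x y.
Proof. by rewrite nakano_addE joinA joinxx -joinA joinxx eqxx. Qed.

Lemma nakano_add_join x y z : x <= z -> z \in nakano_add x y -> z = x `|` y.
Proof. by move=> /join_idPr xz /andP[/eqP -> _]; rewrite xz. Qed.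

End NakanoAdd.

Theorem mainTheorem17 (d : Order.disp_t) (L : tbLatticeType d) (x y z : L) :
  z = x `|` y <->
  (x \in nakano_add z z /\ y \in nakano_add z z /\ z \in nakano_add x y).
Proof.
rewrite !nakano_add_diag; split.
- by move=> ->; rewrite leUl leUr join_nakano_add.
- by case=> xz [_]; apply: nakano_add_join.
Qed.
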